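(* For $1\le k\le n-1$, the random variable $U_k-1$ has a hypergeometric distribution with parameters $n-1$ (population size), $k-1$ (number of marked elements) and $n-k-1$ (number of draws), i.e. $\mathbf P(U_k-1=j)=\binom{k-1}{j}\binom{n-k}{n-k-1-j}\big/\binom{n-1}{n-k-1}$.
   Context: Urn process: let $n\ge2$. An urn initially contains $n$ black balls. It is emptied in $n$ steps: in each of the first $n-1$ steps a uniformly random pair of balls is removed from the urn and replaced by one red ball; in step $n$ the last remaining ball is removed. $U_k$ is the number of red balls in the urn after $k$ steps, $0\le k\le n$. *)

From HB Require Import structures.
From mathcomp Require Import all_boot all_order all_algebra.
Set Implicit Arguments. Unset Strict Implicit. Unset Printing Implicit Defensive.
Import Order.TTheory GRing.Theory Num.Theory.

(* An urn is a sequence of balls: [false] = black, [true] = red.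
   Balls are labelled by their positions, so a uniformly random pair of balls
   is a uniformly random pair of positions (i, j) with i < j. *)

Definition rem2 (i j : nat) (s : seq bool) : seq bool :=
  [seq nth false s t | t <- iota 0 (size s) & (t != i) && (t != j)].

Definition step (i j : nat) (s : seq bool) : seq bool := rcons (rem2 i j s) true.

(* probU k s r = probability that, starting from urn s and performing k steps
   (each removing a uniformly random pair of balls and adding one red ball),
   the urn contains exactly r red balls. *)
Fixpoint probU (k : nat) (s : seq bool) (r : nat) : rat :=
  match k with
  | 0 => (count id s == r)%:R
  | k'.+1 =>
      \sum_(i < size s) \sum_(j < size s | (i < j)%N)
         probU k' (step i j s) r / ('C(size s, 2))%:R
  end%R.

Definition probUk (n k r : nat) : rat := probU k (nseq n false) r.

From HB Require Import structures.
From mathcomp Require Import all_boot all_order all_algebra.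
From mathcomp Require Import ring zify.
Import Order.TTheory GRing.Theory Num.Theory.
Set Implicit Arguments. Unset Strict Implicit. Unset Printing Implicit Defensive.

(* Only the numbers b of black and c of red balls matter: probU k s is the k-th iterate
   of the one-step averaging operator [step_mean] applied to the indicator of the final
   red count, evaluated at the counts of s.  Starting from n black balls the urn holds
   n - k balls after k steps, so conditioning on the last step instead of the first
   turns this into a forward recursion for the law of U_k, a birth-death chain on the
   red count.  The hypergeometric law satisfies the same recursion (by Pascal's rule
   and the absorption identities for binomial coefficients), and both equal the Dirac
   mass at 1 after one step. *)

Lemma mul2_bin2 n : 2 * 'C(n, 2) = n * n.-1.
Proof. by rewrite (mul_bin_left n 1) bin1 subn1 mulnC. Qed.

Lemma bin_pascal2 k v :
  (if v is w.+1 then 'C(k, w) else 0) + 2 * 'C(k, v) + 'C(k, v.+1) = 'C(k.+2, v.+1).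
Proof. by rewrite !binS; case: v => [|v]; rewrite ?bin0 ?binS; lia. Qed.

Lemma count_sum (T : Type) (a : pred T) (s : seq T) : count a s = \sum_(x <- s) a x.
Proof. by rewrite -sumn_count sumnE big_map. Qed.

Lemma count_rem2 (a : pred bool) i j s : i < j < size s ->
  count a s = a (nth false s i) + a (nth false s j) + count a (rem2 i j s).
Proof.
case/andP=> lt_ij lt_js; have lt_is := ltn_trans lt_ij lt_js.
have j_neq_i : j != i by rewrite gtn_eqF.
rewrite -{1}(mkseq_nth false s) !count_sum !big_map big_filter.
rewrite (bigD1_seq i) ?mem_iota ?iota_uniq //= -big_filter.
rewrite (bigD1_seq j) ?filter_uniq ?iota_uniq ?mem_filter ?mem_iota ?j_neq_i //=.
by rewrite big_filter_cond addnA.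
Qed.

Lemma count_black_step i j s : i < j < size s ->
  count negb (step i j s) = count negb s - (2 - (nth false s i + nth false s j)).
Proof.
move=> ijs; rewrite (count_rem2 _ ijs) /step -cats1 count_cat /= addn0.
by case: (nth false s i); case: (nth false s j) => /=; lia.
Qed.

Lemma count_red_step i j s : i < j < size s ->
  count id (step i j s) = (count id s).+1 - (nth false s i + nth false s j).
Proof.
move=> ijs; rewrite (count_rem2 _ ijs) /step -cats1 count_cat /= addn0.
by case: (nth false s i); case: (nth false s j) => /=; lia.
Qed.


Local Open Scope ring_scope.

Lemma natr_div_pmul2l (p x y : nat) : (0 < p)%N ->
  (p * x)%:R / (p * y)%:R = x%:R / y%:R :> rat.
Proof.
move=> p_gt0; rewrite !natrM invfM mulrACA divff ?mul1r //.
by rewrite pnatr_eq0 -lt0n.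
Qed.

Lemma sum_ord_pairsS (R : nmodType) N (f : nat -> nat -> R) :
  \sum_(i < N.+1) \sum_(j < N.+1 | (i < j)%N) f i j =
  \sum_(j < N) f 0%N j.+1 + \sum_(i < N) \sum_(j < N | (i < j)%N) f i.+1 j.+1.
Proof.
rewrite big_ord_recl [X in X + _]big_mkcond big_ord_recl /= add0r; congr (_ + _).
apply: eq_bigr => i _; rewrite big_mkcond big_ord_recl /= add0r [RHS]big_mkcond.
by apply: eq_bigr.
Qed.

Lemma sum_nth_bool (R : nmodType) (s : seq bool) (F : bool -> R) :
  \sum_(j < size s) F (nth false s j) = F true *+ count id s + F false *+ count negb s.
Proof.
elim: s => [|y s IH]; first by rewrite big_ord0 addr0.
rewrite big_ord_recl /= IH !mulrnDr addrACA.
by case: y; rewrite /= ?mulr0n ?add0r ?addr0 // addrC.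
Qed.

Lemma sum_pairs_nth_bool (R : nmodType) (s : seq bool) (K : nat -> R) :
  \sum_(i < size s) \sum_(j < size s | (i < j)%N) K (nth false s i + nth false s j)%N =
  K 0%N *+ 'C(count negb s, 2) + K 1%N *+ (count negb s * count id s)
  + K 2%N *+ 'C(count id s, 2).
Proof.
elim: s => [|y s IH]; first by rewrite big_ord0 !mulr0n !addr0.
rewrite [size _]/=.
rewrite (@sum_ord_pairsS _ _ (fun i j => K (nth false (y :: s) i + nth false (y :: s) j)%N)).
rewrite /= IH (@sum_nth_bool _ s (fun x => K (y + x)%N)).
case: y; rewrite /= !add0n ?add1n !binS !bin1 ?mulnSr ?mulSn !mulrnDr !addrA.
  by rewrite (ACl (3*4*2*5*1)).
by rewrite (ACl (3*2*1*4*5)).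
Qed.

Definition step_mean (F : nat -> nat -> rat) (b c : nat) : rat :=
  ('C(b, 2)%:R * F (b - 2)%N c.+1 + (b * c)%:R * F b.-1 c + 'C(c, 2)%:R * F b c.-1)
  / 'C(b + c, 2)%:R.

Definition red_indicator (r : nat) (b c : nat) : rat := (c == r)%:R.

Lemma probU_iter k s r :
  probU k s r = iter k step_mean (red_indicator r) (count negb s) (count id s).
Proof.
elim: k s => [//|k IH] s /=.
set b := count negb s; set c := count id s; set G := iter k _ _.
(* [t] is the number of red balls in the drawn pair. *)
pose K t := G (b - (2 - t))%N (c.+1 - t)%N / 'C(size s, 2)%:R.
have size_s : size s = (b + c)%N by rewrite addnC count_predC.
rewrite (eq_bigr (fun i : 'I_(size s) =>
    \sum_(j < size s | (i < j)%N) K (nth false s i + nth false s j)%N)).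
  rewrite sum_pairs_nth_bool /K /step_mean -/b -/c size_s.
  rewrite (_ : 2 - 1 = 1)%N // (_ : 2 - 2 = 0)%N // !subn0 subn1 subSS subn0 subSS subn1.
  by rewrite -!mulrnAl -!mulrDl !mulr_natl.
move=> i _; apply: eq_bigr => j lt_ij.
by rewrite IH count_black_step ?count_red_step ?lt_ij ?ltn_ord.
Qed.

Lemma iter_step_mean_lin k (x y z : rat) F G H b c :
  iter k step_mean (fun b c => x * F b c + y * G b c + z * H b c) b c =
  x * iter k step_mean F b c + y * iter k step_mean G b c + z * iter k step_mean H b c.
Proof. by elim: k b c => [//|k IH] b c; rewrite /= /step_mean !IH; ring. Qed.

Lemma iter_step_mean_on_level k F G b c :
  (forall b' c', (b' + c' + k = b + c)%N -> F b' c' = G b' c') ->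
  iter k step_mean F b c = iter k step_mean G b c.
Proof.
elim: k b c => [|k IH] b c FG /=; first by apply: FG; rewrite addn0.
rewrite /step_mean; congr (_ / _); congr (_ + _ + _).
- have [b_lt2|b_ge2] := ltnP b 2; first by rewrite bin_small ?mul0r.
  by congr (_ * _); apply: IH => b' c' E; apply: FG; lia.
- case: b FG => [|b] FG; first by rewrite mul0n !mul0r.
  by congr (_ * _); apply: IH => b' c' E; apply: FG; lia.
- case: c FG => [|[|c]] FG; try by rewrite bin_small ?mul0r.
  by congr (_ * _); apply: IH => b' c' E; apply: FG; lia.
Qed.

Definition prob_up (m u : nat) : rat :=
  (if u is v.+1 then 'C(m - v, 2) else 0)%:R / 'C(m, 2)%:R.
Definition prob_stay (m u : nat) : rat := ((m - u) * u)%:R / 'C(m, 2)%:R.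
Definition prob_down (m u : nat) : rat := 'C(u.+1, 2)%:R / 'C(m, 2)%:R.

Lemma step_mean_red_indicator m u b c : (b + c)%N = m ->
  step_mean (red_indicator u) b c =
  prob_up m u * red_indicator u.-1 b c + prob_stay m u * red_indicator u b c
  + prob_down m u * red_indicator u.+1 b c.
Proof.
move=> <-; rewrite /step_mean /red_indicator /prob_up /prob_stay /prob_down.
rewrite !(mulrAC _ _^-1) -!mulrDl; congr (_ / _); congr (_ + _ + _).
- case: u => [|v] /=; first by rewrite mulr0 mul0r.
  by rewrite eqSS; case: eqP => [->|]; rewrite ?addnK ?mulr0.
- by have [->|] := eqVneq c u; rewrite ?addnK ?mulr0.
- case: c => [|[|c]]; rewrite /= ?mul0r ?eqSS.
  + by rewrite mulr0.
  + by have [<-|] := eqVneq 0%N u; rewrite ?mulr0.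
  + by have [<-|] := eqVneq c.+1 u; rewrite ?mulr0.
Qed.

Lemma iter_step_mean_red_forward n k u :
  iter k.+1 step_mean (red_indicator u) n 0 =
  prob_up (n - k) u * iter k step_mean (red_indicator u.-1) n 0
  + prob_stay (n - k) u * iter k step_mean (red_indicator u) n 0
  + prob_down (n - k) u * iter k step_mean (red_indicator u.+1) n 0.
Proof.
rewrite iterSr -iter_step_mean_lin; apply: iter_step_mean_on_level => b c level.
by apply: step_mean_red_indicator; lia.
Qed.

(* P(U_k = u); the hypergeometric mass of the statement up to the symmetry of 'C. *)
Definition red_law (n k u : nat) : rat :=
  ((if u is v.+1 then 'C(k.-1, v) else 0) * 'C(n - k, u))%:R / 'C(n - 1, k)%:R.

Local Close Scope ring_scope.

Lemma red_law_numerator k m v :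
  2 * ('C(m - v, 2) * ((if v is w.+1 then 'C(k, w) else 0) * 'C(m, v))
       + (m - v.+1) * v.+1 * ('C(k, v) * 'C(m, v.+1))
       + 'C(v.+2, 2) * ('C(k, v.+1) * 'C(m, v.+2)))
  = m * k.+2 * ('C(k.+1, v) * 'C(m.-1, v.+1)).
Proof.
set a := if v is _.+1 then _ else _.
have up : 2 * 'C(m - v, 2) * 'C(m, v) = (m - v.+1) * v.+1 * 'C(m, v.+1).
  by rewrite mul2_bin2 (mulnC (m - v)) -mulnA -mul_bin_left subnS; ring.
have down : 2 * 'C(v.+2, 2) * 'C(m, v.+2) = (m - v.+1) * v.+1 * 'C(m, v.+1).
  by rewrite mul2_bin2 /= (mulnC v.+2) -mulnA mul_bin_left; ring.
transitivity (a * (2 * 'C(m - v, 2) * 'C(m, v))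
  + 2 * 'C(k, v) * ((m - v.+1) * v.+1 * 'C(m, v.+1))
  + 'C(k, v.+1) * (2 * 'C(v.+2, 2) * 'C(m, v.+2))).
  by ring.
rewrite up down.
transitivity ((m - v.+1) * 'C(m, v.+1) * (v.+1 * (a + 2 * 'C(k, v) + 'C(k, v.+1)))).
  by ring.
by rewrite bin_pascal2 -mul_bin_diag -mul_bin_down /=; ring.
Qed.

Lemma red_law_denominator n k : k < n ->
  2 * 'C(n - k, 2) * 'C(n - 1, k) = (n - k) * k.+1 * 'C(n - 1, k.+1).
Proof.
move=> lt_kn; rewrite mul2_bin2 -!mulnA mul_bin_left; congr (_ * (_ * _)); lia.
Qed.

Local Open Scope ring_scope.

Lemma red_law_forward n k u : (0 < k)%N -> (k.+1 < n)%N ->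
  red_law n k.+1 u =
  prob_up (n - k) u * red_law n k u.-1 + prob_stay (n - k) u * red_law n k u
  + prob_down (n - k) u * red_law n k u.+1.
Proof.
case: k => [//|k] _ lt_kn.
rewrite /red_law /prob_up /prob_stay /prob_down !mulf_div -!mulrDl -!natrM -!natrD.
case: u => [|v] /=; first by rewrite !mul0n !muln0 !mul0r.
rewrite -[RHS](natr_div_pmul2l _ _ (isT : 0 < 2)%N) red_law_numerator.
rewrite [(2 * (_ * _))%N]mulnA red_law_denominator 1?ltnW // natr_div_pmul2l; last first.
  by rewrite muln_gt0 subn_gt0 ltnW.
by rewrite subnS.
Qed.

Lemma iter_step_mean_red_law n k u : (0 < k)%N -> (k < n)%N ->
  iter k step_mean (red_indicator u) n 0 = red_law n k u.
Proof.
move=> k_gt0; elim: k k_gt0 u => [//|k IH] _ u lt_kn.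
rewrite iter_step_mean_red_forward.
case: k IH lt_kn => [|k] IH lt_kn.
  have binn2 : 'C(n, 2)%:R != 0 :> rat by rewrite pnatr_eq0 -lt0n bin_gt0.
  have binn1 : 'C(n - 1, 1)%:R != 0 :> rat by rewrite bin1 pnatr_eq0 -lt0n subn_gt0.
  rewrite /= /red_indicator /red_law /prob_up /prob_stay /prob_down subn0.
  case: u => [|[|u]]; rewrite /= ?muln0 ?mul0n ?mulr0 ?addr0 ?add0r ?mul0r //.
  by rewrite subn0 mulr1 mul1n !divff.
by rewrite !IH ?(ltnW lt_kn) // (@red_law_forward n k.+1 u).
Qed.

Local Close Scope ring_scope.

Theorem mainTheorem9 (n k : nat) (hn : 2 <= n) (hk1 : 1 <= k) (hk2 : k <= n - 1) :
  probUk n k 0 = 0%R /\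
  forall j : nat,
  probUk n k j.+1 =
    (if j <= n - k - 1 then
       (('C(k - 1, j) * 'C(n - k, n - k - 1 - j))%:R / ('C(n - 1, n - k - 1))%:R)%R
     else 0%R).
Proof.
have law r : probUk n k r = red_law n k r.
  by rewrite /probUk probU_iter !count_nseq /= mul1n mul0n iter_step_mean_red_law //; lia.
split=> [|j]; first by rewrite law /red_law mul0n mul0r.
rewrite law /red_law /= subn1.
have [le_j|lt_j] := leqP; last by rewrite (@bin_small (n - k) j.+1) ?muln0 ?mul0r //; lia.
rewrite -[(n - k - 1 - j)%N]subnDA add1n bin_sub; last lia.
by rewrite subnAC -!subn1 bin_sub.
Qed.
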